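(* There exist absolute constants $\kappa_1,\kappa_2>1$ such that if $b_1\ge1$, $b_2\ge\kappa_1b_1$ and $b_3\ge\kappa_2b_2$, then for all $\beta\ge1$ (and $\gamma=(\alpha,\beta)$), $\mathcal{N}_{\gamma,2}(\mathcal{C}^{(3)}_{b_1,b_2,b_3})\subset\mathcal{C}^{(3)}_{b_1,b_2,b_3}$.
   Context: For $\beta\ge1$ let $g_{\gamma,2}:[0,1]\to[\tfrac12,1]$, $g_{\gamma,2}(x)=\tfrac12(x^{1/\beta}+1)$, be the inverse of $x\mapsto2^\beta(x-\tfrac12)^\beta$ on $[\tfrac12,1]$ (it does not depend on $\alpha$), and $\mathcal{N}_{\gamma,2}(\varphi)(x)=g_{\gamma,2}'(x)\,\varphi(g_{\gamma,2}(x))$. For $b_1,b_2,b_3>0$, $\mathcal{C}^{(3)}_{b_1,b_2,b_3}$ is the set of $\varphi\in C^3((0,1])$ with $\varphi(x)\ge0$, $|\varphi'(x)|\le\frac{b_1}{x}\varphi(x)$, $|\varphi''(x)|\le\frac{b_2}{x^2}\varphi(x)$, $|\varphi'''(x)|\le\frac{b_3}{x^3}\varphi(x)$ for all $x\in(0,1]$. *)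

From Stdlib Require Import Reals Lra.
From Coquelicot Require Import Coquelicot.
Open Scope R_scope.

Definition I01 (x : R) : Prop := 0 < x <= 1.

Definition is_deriv_on_I01 (f f' : R -> R) : Prop :=
  forall x, I01 x -> forall eps, 0 < eps -> exists delta, 0 < delta /\
    forall y, I01 y -> y <> x -> Rabs (y - x) < delta ->
      Rabs ((f y - f x) / (y - x) - f' x) < eps.

Definition continuous_on_I01 (f : R -> R) : Prop :=
  forall x, I01 x -> forall eps, 0 < eps -> exists delta, 0 < delta /\
    forall y, I01 y -> Rabs (y - x) < delta -> Rabs (f y - f x) < eps.

Definition C3class (b1 b2 b3 : R) (phi : R -> R) : Prop :=
  exists phi1 phi2 phi3 : R -> R,
    is_deriv_on_I01 phi phi1 /\ is_deriv_on_I01 phi1 phi2 /\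
    is_deriv_on_I01 phi2 phi3 /\ continuous_on_I01 phi3 /\
    forall x, I01 x ->
      0 <= phi x /\
      Rabs (phi1 x) <= b1 / x * phi x /\
      Rabs (phi2 x) <= b2 / x ^ 2 * phi x /\
      Rabs (phi3 x) <= b3 / x ^ 3 * phi x.

(* g_{gamma,2}(x) = (x^{1/beta} + 1)/2 ; independent of alpha. *)
Definition g2 (beta : R) (x : R) : R := (Rpower x (1 / beta) + 1) / 2.

Definition N2 (beta : R) (phi : R -> R) (x : R) : R :=
  Derive (g2 beta) x * phi (g2 beta x).

From Stdlib Require Import Reals Lra.
From Coquelicot Require Import Coquelicot.
Open Scope R_scope.

(* With s = 1/beta in (0,1] and g x = (x^s + 1)/2, N2 beta phi is
   psi x = (s/2) x^(s-1) phi (g x).  Functions a x^(m s - j) F (g x) are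
   closed under differentiation (with F becoming F'), so psi', psi'' and
   psi''' are explicit sums of such terms.  Putting y = g x,
   w = s x^s / (2 y) in [0, s/2] and G_k = y^k phi^(k)(y), which satisfies
   |G_k| <= b_k phi(y), one finds x^k psi^(k)(x) = psi(x) Q_k / phi(y) with
   Q_k a polynomial in s, w, phi(y), G_1, ..., G_k whose coefficients are
   bounded because |s - 1| <= 1 and w <= 1/2.  The top coefficient of Q_k is
   w^k <= 2^-k, so |Q_k| <= b_k phi(y) as soon as b_1 >= 1 and
   b_(k+1) >= 5 b_k. *)

Definition punctured_I01 (x : R) : (R -> Prop) -> Prop :=
  within (fun y => I01 y /\ y <> x) (locally x).
Definition near_I01 (x : R) : (R -> Prop) -> Prop := within I01 (locally x).

#[local] Instance punctured_I01_filter x : Filter (punctured_I01 x) :=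
  within_filter _ _ _ (@filter_filter _ _ (locally_filter x)).
#[local] Instance near_I01_filter x : Filter (near_I01 x) :=
  within_filter _ _ _ (@filter_filter _ _ (locally_filter x)).

Definition slope (f : R -> R) (x y : R) : R := (f y - f x) / (y - x).
Definition is_derive_I01 (f : R -> R) (x v : R) : Prop :=
  filterlim (slope f x) (punctured_I01 x) (locally v).
Definition continuous_I01 (f : R -> R) (x : R) : Prop :=
  filterlim f (near_I01 x) (locally (f x)).

Lemma is_deriv_on_I01_iff (f f' : R -> R) :
  is_deriv_on_I01 f f' <-> forall x, I01 x -> is_derive_I01 f x (f' x).
Proof.
  split.
  - intros Hf x Hx. apply filterlim_locally. intros eps.
    destruct (Hf x Hx eps (cond_pos eps)) as [d [Hd Hslope]].
    exists (mkposreal d Hd). intros y Hyx [HyI Hy]. exact (Hslope y HyI Hy Hyx).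
  - intros Hf x Hx eps Heps.
    destruct (proj1 (filterlim_locally _ _) (Hf x Hx) (mkposreal eps Heps)) as [d Hd].
    exists d. split; [apply cond_pos |].
    intros y HyI Hy Hyx. exact (Hd y Hyx (conj HyI Hy)).
Qed.

Lemma continuous_on_I01_iff (f : R -> R) :
  continuous_on_I01 f <-> forall x, I01 x -> continuous_I01 f x.
Proof.
  split.
  - intros Hf x Hx. apply filterlim_locally. intros eps.
    destruct (Hf x Hx eps (cond_pos eps)) as [d [Hd Hf']].
    exists (mkposreal d Hd). intros y Hyx HyI. exact (Hf' y HyI Hyx).
  - intros Hf x Hx eps Heps.
    destruct (proj1 (filterlim_locally _ _) (Hf x Hx) (mkposreal eps Heps)) as [d Hd].
    exists d. split; [apply cond_pos |].
    intros y HyI Hyx. exact (Hd y Hyx HyI).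
Qed.

Section FilterlimArith.
Context {T : Type} {F : (T -> Prop) -> Prop} {FF : Filter F}.

Lemma filterlim_Rplus (f g : T -> R) (a b : R) :
  filterlim f F (locally a) -> filterlim g F (locally b) ->
  filterlim (fun t => f t + g t) F (locally (a + b)).
Proof. intros Hf Hg. exact (filterlim_comp_2 f g Rplus Hf Hg (filterlim_plus a b)). Qed.

Lemma filterlim_Rmult (f g : T -> R) (a b : R) :
  filterlim f F (locally a) -> filterlim g F (locally b) ->
  filterlim (fun t => f t * g t) F (locally (a * b)).
Proof. intros Hf Hg. exact (filterlim_comp_2 f g Rmult Hf Hg (filterlim_mult a b)). Qed.

End FilterlimArith.

Lemma filterlim_within_of_locally (D : R -> Prop) (f : R -> R) (x l : R) :
  filterlim f (locally x) (locally l) -> filterlim f (within D (locally x)) (locally l).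
Proof. apply filterlim_filter_le_1, (filter_le_within (F := locally x)). Qed.

Lemma continuous_of_is_derive (f : R -> R) (x v : R) : is_derive f x v -> continuous f x.
Proof. intros Hf. exact (ex_derive_continuous f x (ex_intro _ v Hf)). Qed.

Lemma continuous_I01_of_punctured (f : R -> R) (x : R) :
  filterlim f (punctured_I01 x) (locally (f x)) -> continuous_I01 f x.
Proof.
  intros Hf P HP. specialize (Hf P HP).
  unfold filtermap, near_I01, punctured_I01, within in *. revert Hf. apply filter_imp.
  intros y Hy HyI. destruct (Req_dec y x) as [-> | Hyx].
  - exact (locally_singleton _ _ HP).
  - exact (Hy (conj HyI Hyx)).
Qed.

Lemma is_derive_I01_punctured_limit (f : R -> R) (x v : R) :
  is_derive_I01 f x v -> filterlim f (punctured_I01 x) (locally (f x)).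
Proof.
  intros Hf.
  apply filterlim_ext_loc with (f := fun y => f x + slope f x y * (y - x)).
  { unfold punctured_I01, within. apply filter_forall. intros y [_ Hyx]. unfold slope. field. lra. }
  replace (locally (f x)) with (locally (f x + v * (x + - x))) by (f_equal; ring).
  apply filterlim_Rplus; [apply filterlim_const |].
  apply filterlim_Rmult; [exact Hf |].
  apply filterlim_Rplus; [apply filterlim_within_of_locally, filterlim_id | apply filterlim_const].
Qed.

Lemma is_derive_I01_continuous (f : R -> R) (x v : R) :
  is_derive_I01 f x v -> continuous_I01 f x.
Proof. intros Hf. apply continuous_I01_of_punctured, (is_derive_I01_punctured_limit _ _ v), Hf. Qed.

Lemma is_derive_I01_of_is_derive (f : R -> R) (x v : R) :
  is_derive f x v -> is_derive_I01 f x v.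
Proof.
  intros Hf. apply is_derive_Reals in Hf. apply filterlim_locally. intros eps.
  destruct (Hf eps (cond_pos eps)) as [d Hd].
  exists d. intros y Hyx [_ Hy].
  specialize (Hd (y - x)). rewrite Rplus_minus in Hd.
  apply Hd; [lra | exact Hyx].
Qed.

Lemma is_derive_I01_eq (f : R -> R) (x v w : R) :
  is_derive_I01 f x v -> v = w -> is_derive_I01 f x w.
Proof. intros Hf <-. exact Hf. Qed.

Lemma is_derive_I01_ext (f g : R -> R) (x v : R) :
  (forall y, I01 y -> f y = g y) -> I01 x -> is_derive_I01 f x v -> is_derive_I01 g x v.
Proof.
  intros Hfg Hx Hf. apply filterlim_ext_loc with (f := slope f x); [| exact Hf].
  unfold punctured_I01, within. apply filter_forall. intros y [Hy _].
  unfold slope. rewrite !Hfg; auto.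
Qed.

Lemma is_derive_I01_plus (f g : R -> R) (x a b : R) :
  is_derive_I01 f x a -> is_derive_I01 g x b ->
  is_derive_I01 (fun y => f y + g y) x (a + b).
Proof.
  intros Hf Hg.
  apply filterlim_ext_loc with (f := fun y => slope f x y + slope g x y).
  { unfold punctured_I01, within. apply filter_forall. intros y [_ Hyx]. unfold slope. field. lra. }
  apply filterlim_Rplus; assumption.
Qed.

Lemma is_derive_I01_mult (f g : R -> R) (x a b : R) :
  is_derive f x a -> is_derive_I01 g x b ->
  is_derive_I01 (fun y => f y * g y) x (a * g x + f x * b).
Proof.
  intros Hf Hg.
  apply filterlim_ext_loc with (f := fun y => slope f x y * g y + f x * slope g x y).
  { unfold punctured_I01, within. apply filter_forall. intros y [_ Hyx]. unfold slope. field. lra. }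
  apply filterlim_Rplus; apply filterlim_Rmult.
  - apply is_derive_I01_of_is_derive, Hf.
  - apply (is_derive_I01_punctured_limit _ _ b), Hg.
  - apply filterlim_const.
  - exact Hg.
Qed.

Lemma is_derive_I01_comp (f g : R -> R) (x a b : R) :
  I01 x -> (forall y, I01 y -> I01 (g y)) ->
  (forall y z, I01 y -> I01 z -> y <> z -> g y <> g z) ->
  is_derive g x b -> is_derive_I01 f (g x) a ->
  is_derive_I01 (fun y => f (g y)) x (a * b).
Proof.
  intros Hx HgI Hginj Hg Hf.
  apply filterlim_ext_loc with (f := fun y => slope f (g x) (g y) * slope g x y).
  { unfold punctured_I01, within. apply filter_forall. intros y [Hy Hyx].
    pose proof (Hginj y x Hy Hx Hyx).
    unfold slope. field. lra. }
  apply filterlim_Rmult; [| apply is_derive_I01_of_is_derive, Hg].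
  apply (filterlim_comp _ _ _ g _ _ (punctured_I01 (g x))); [| exact Hf].
  intros P HP. unfold filtermap, punctured_I01, within in *.
  assert (Hgc := continuous_of_is_derive g x b Hg _ HP).
  unfold filtermap in Hgc. revert Hgc. apply filter_imp. intros y HPy [Hy Hyx].
  apply HPy. split; [apply HgI, Hy | apply Hginj; assumption].
Qed.

Lemma continuous_I01_plus (f g : R -> R) (x : R) :
  continuous_I01 f x -> continuous_I01 g x -> continuous_I01 (fun y => f y + g y) x.
Proof. apply filterlim_Rplus. Qed.

Lemma continuous_I01_mult (f g : R -> R) (x : R) :
  continuous_I01 f x -> continuous_I01 g x -> continuous_I01 (fun y => f y * g y) x.
Proof. apply filterlim_Rmult. Qed.

Lemma continuous_I01_of_continuous (f : R -> R) (x : R) :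
  continuous f x -> continuous_I01 f x.
Proof. apply filterlim_within_of_locally. Qed.

Lemma continuous_I01_comp (f g : R -> R) (x : R) :
  (forall y, I01 y -> I01 (g y)) -> continuous g x -> continuous_I01 f (g x) ->
  continuous_I01 (fun y => f (g y)) x.
Proof.
  intros HgI Hg Hf.
  apply (filterlim_comp _ _ _ g f _ (near_I01 (g x))); [| exact Hf].
  intros P HP. unfold filtermap, near_I01, within in *.
  specialize (Hg _ HP). unfold filtermap in Hg. revert Hg. apply filter_imp.
  intros y HPy Hy. exact (HPy (HgI y Hy)).
Qed.

Definition gpow (s x : R) : R := (Rpower x s + 1) / 2.

Definition term (s a : R) (m j : nat) (F : R -> R) (x : R) : R :=
  a * Rpower x (INR m * s - INR j) * F (gpow s x).

Lemma is_derive_scal_Rpower (a r x : R) : 0 < x ->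
  is_derive (fun y => a * Rpower y r) x (a * (r * Rpower x (r - 1))).
Proof. intros Hx. apply is_derive_scal, is_derive_Reals, derivable_pt_lim_power, Hx. Qed.

Lemma is_derive_gpow (s x : R) : 0 < x -> is_derive (gpow s) x (s / 2 * Rpower x (s - 1)).
Proof.
  intros Hx. unfold gpow.
  apply is_derive_ext with (f := fun y => / 2 * Rpower y s + / 2).
  { intros y. simpl. field. }
  replace (s / 2 * Rpower x (s - 1)) with (/ 2 * (s * Rpower x (s - 1)) + 0) by field.
  apply (is_derive_plus (K := R_AbsRing) (V := R_NormedModule)).
  - apply is_derive_scal_Rpower, Hx.
  - apply (is_derive_const (K := R_AbsRing) (V := R_NormedModule)).
Qed.

Lemma Rpower_in_01 (s x : R) : 0 < s -> I01 x -> 0 < Rpower x s <= 1.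
Proof.
  intros Hs [Hx0 Hx1]. split; [apply exp_pos |].
  replace 1 with (Rpower 1 s) by (unfold Rpower; rewrite ln_1, Rmult_0_r; apply exp_0).
  apply Rle_Rpower_l; lra.
Qed.

Lemma gpow_I01 (s x : R) : 0 < s -> I01 x -> I01 (gpow s x).
Proof. intros Hs Hx. pose proof (Rpower_in_01 s x Hs Hx). unfold gpow, I01. lra. Qed.

Lemma gpow_inj (s y z : R) : s <> 0 -> 0 < y -> 0 < z -> y <> z -> gpow s y <> gpow s z.
Proof.
  intros Hs Hy Hz Hyz E. apply Hyz. unfold gpow, Rpower in E.
  assert (Eexp : exp (s * ln y) = exp (s * ln z)) by lra.
  apply exp_inv, (Rmult_eq_reg_l s) in Eexp; [| exact Hs].
  apply ln_inv; assumption.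
Qed.

Lemma term_Rpower_pow (s a : R) (m j : nat) (F : R -> R) (x : R) : 0 < x ->
  term s a m j F x = a * Rpower x s ^ m / x ^ j * F (gpow s x).
Proof.
  intros Hx. unfold term, Rminus.
  rewrite Rpower_plus, Rpower_Ropp, (Rmult_comm (INR m)), <- Rpower_mult.
  rewrite (Rpower_pow m (Rpower x s)), (Rpower_pow j x) by (try apply exp_pos; exact Hx).
  unfold Rdiv. ring.
Qed.

Lemma is_derive_I01_term (s a : R) (m j : nat) (F F' : R -> R) (x : R) : 0 < s -> I01 x ->
  is_derive_I01 F (gpow s x) (F' (gpow s x)) ->
  is_derive_I01 (term s a m j F) x
    (term s (a * (INR m * s - INR j)) m (S j) F x + term s (a * (s / 2)) (S m) (S j) F' x).
Proof.
  intros Hs Hx HF. assert (Hx0 : 0 < x) by apply Hx.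
  pose proof (is_derive_I01_mult _ _ x _ _ (is_derive_scal_Rpower a (INR m * s - INR j) x Hx0)
    (is_derive_I01_comp F (gpow s) x _ _ Hx (fun y => gpow_I01 s y Hs)
       (fun y z Hy Hz => gpow_inj s y z (Rgt_not_eq _ _ Hs) (proj1 Hy) (proj1 Hz))
       (is_derive_gpow s x Hx0) HF)) as Hd.
  apply (is_derive_I01_eq _ _ _ _ Hd). unfold term. rewrite !S_INR.
  replace (INR m * s - (INR j + 1)) with (INR m * s - INR j - 1) by ring.
  replace ((INR m + 1) * s - (INR j + 1)) with ((INR m * s - INR j) + (s - 1)) by ring.
  rewrite Rpower_plus. ring.
Qed.

Lemma continuous_I01_term (s a : R) (m j : nat) (F : R -> R) (x : R) : 0 < s -> I01 x ->
  continuous_I01 F (gpow s x) -> continuous_I01 (term s a m j F) x.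
Proof.
  intros Hs Hx HF. assert (Hx0 : 0 < x) by apply Hx.
  apply (continuous_I01_mult (fun y => a * Rpower y (INR m * s - INR j)) (fun y => F (gpow s y))).
  - apply continuous_I01_of_continuous.
    exact (continuous_of_is_derive _ _ _ (is_derive_scal_Rpower _ _ _ Hx0)).
  - apply continuous_I01_comp; [intros y; apply gpow_I01, Hs | | exact HF].
    apply (continuous_of_is_derive _ _ _ (is_derive_gpow s x Hx0)).
Qed.

Section NDerivatives.
Variables (s : R) (phi phi1 phi2 phi3 : R -> R).

Definition psi (x : R) : R := term s (s / 2) 1 1 phi x.
(* Coefficients of psi1..psi3: iterate [is_derive_I01_term] and collect the
   terms with equal (m, j). *)
Definition psi1 (x : R) : R :=
  term s (s / 2 * (s - 1)) 1 2 phi x + term s ((s / 2) ^ 2) 2 2 phi1 x.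
Definition psi2 (x : R) : R :=
  term s (s / 2 * (s - 1) * (s - 2)) 1 3 phi x + term s (3 * (s / 2) ^ 2 * (s - 1)) 2 3 phi1 x
  + term s ((s / 2) ^ 3) 3 3 phi2 x.
Definition psi3 (x : R) : R :=
  term s (s / 2 * (s - 1) * (s - 2) * (s - 3)) 1 4 phi x
  + term s ((s / 2) ^ 2 * (s - 1) * (7 * s - 11)) 2 4 phi1 x
  + term s (6 * (s / 2) ^ 3 * (s - 1)) 3 4 phi2 x + term s ((s / 2) ^ 4) 4 4 phi3 x.

Hypothesis Hs : 0 < s.
Hypothesis D1 : forall x, I01 x -> is_derive_I01 phi x (phi1 x).
Hypothesis D2 : forall x, I01 x -> is_derive_I01 phi1 x (phi2 x).
Hypothesis D3 : forall x, I01 x -> is_derive_I01 phi2 x (phi3 x).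
Hypothesis C3 : forall x, I01 x -> continuous_I01 phi3 x.

Lemma is_derive_I01_psi (x : R) : I01 x -> is_derive_I01 psi x (psi1 x).
Proof.
  intros Hx. eapply is_derive_I01_eq.
  - apply is_derive_I01_term; auto using gpow_I01.
  - unfold psi1, term. simpl INR. ring.
Qed.

Lemma is_derive_I01_psi1 (x : R) : I01 x -> is_derive_I01 psi1 x (psi2 x).
Proof.
  intros Hx. eapply is_derive_I01_eq.
  - apply is_derive_I01_plus; apply is_derive_I01_term; auto using gpow_I01.
  - unfold psi2, term. simpl INR. ring.
Qed.

Lemma is_derive_I01_psi2 (x : R) : I01 x -> is_derive_I01 psi2 x (psi3 x).
Proof.
  intros Hx. eapply is_derive_I01_eq.
  - repeat apply is_derive_I01_plus; apply is_derive_I01_term; auto using gpow_I01.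
  - unfold psi3, term. simpl INR. ring.
Qed.

Lemma continuous_I01_psi3 (x : R) : I01 x -> continuous_I01 psi3 x.
Proof.
  intros Hx.
  repeat apply continuous_I01_plus; apply continuous_I01_term; auto.
  all: first [apply C3 | eapply is_derive_I01_continuous; first [apply D1 | apply D2 | apply D3]].
  all: auto using gpow_I01.
Qed.

End NDerivatives.

Definition weight (s x : R) : R := s / 2 * Rpower x s / gpow s x.

Lemma weight_bounds (s x : R) : 0 < s -> I01 x -> 0 <= weight s x <= s / 2.
Proof.
  intros Hs Hx. pose proof (Rpower_in_01 s x Hs Hx) as HP.
  unfold weight, gpow. set (P := Rpower x s) in *.
  replace (s / 2 * P / ((P + 1) / 2)) with (s / 2 * (2 * P / (P + 1))) by (field; lra).
  assert (0 <= 2 * P / (P + 1) <= 1).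
  { split; [apply Rdiv_le_0_compat; lra |].
    apply Rmult_le_reg_r with (P + 1); [lra |]. field_simplify; lra. }
  split; nra.
Qed.

Lemma Rabs_pow_mult_le (y b p F : R) (k : nat) :
  0 < y -> Rabs p <= b / y ^ k * F -> Rabs (y ^ k * p) <= b * F.
Proof.
  intros Hy Hp. assert (Hyk : 0 < y ^ k) by (apply pow_lt, Hy).
  rewrite Rabs_mult, (Rabs_pos_eq _ (Rlt_le _ _ Hyk)).
  replace (b * F) with (y ^ k * (b / y ^ k * F)) by (field; lra).
  apply Rmult_le_compat_l; lra.
Qed.

Lemma Rabs_div_pow_mult_le (x K Q b F : R) (k : nat) :
  0 < x -> 0 <= K -> Rabs Q <= b * F -> Rabs (K / x ^ S k * Q) <= b / x ^ k * (K / x * F).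
Proof.
  intros Hx HK HQ. assert (Hxk : 0 < x ^ k) by (apply pow_lt, Hx).
  assert (HKx : 0 <= K / x ^ S k) by (apply Rdiv_le_0_compat; [exact HK | apply pow_lt, Hx]).
  rewrite Rabs_mult, (Rabs_pos_eq _ HKx).
  replace (b / x ^ k * (K / x * F)) with (K / x ^ S k * (b * F)) by (simpl; field; lra).
  apply Rmult_le_compat_l; assumption.
Qed.
(* The polynomials Q_k of the header, with F = phi(y). *)
Lemma Rabs_factor1_le (s w b1 F G1 : R) :
  0 < s <= 1 -> 0 <= w <= s / 2 -> 1 <= b1 -> 0 <= F -> Rabs G1 <= b1 * F ->
  Rabs ((s - 1) * F + w * G1) <= b1 * F.
Proof.
  intros Hs Hw Hb1 HF HG1.
  eapply Rle_trans; [apply Rabs_triang |].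
  rewrite !Rabs_mult, (Rabs_left1 (s - 1)), (Rabs_pos_eq F), (Rabs_pos_eq w) by lra.
  assert (w * Rabs G1 <= w * (b1 * F)) by (apply Rmult_le_compat_l; lra).
  assert ((1 - s) * F <= (1 - s) * b1 * F) by (apply Rmult_le_compat_r; nra).
  assert (0 <= b1 * F * (s - w)) by (apply Rmult_le_pos; nra).
  nra.
Qed.

Lemma Rabs_factor2_le (s w b1 b2 F G1 G2 : R) :
  0 < s <= 1 -> 0 <= w <= s / 2 -> 1 <= b1 -> 5 * b1 <= b2 -> 0 <= F ->
  Rabs G1 <= b1 * F -> Rabs G2 <= b2 * F ->
  Rabs ((s - 1) * (s - 2) * F + 3 * (s - 1) * w * G1 + w ^ 2 * G2) <= b2 * F.
Proof.
  intros Hs Hw Hb1 Hb2 HF HG1 HG2.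
  eapply Rle_trans; [apply Rabs_triang |].
  eapply Rle_trans; [apply Rplus_le_compat_r, Rabs_triang |].
  assert (Hw2 : 0 <= w ^ 2 <= 1 / 4) by (simpl; split; nra).
  rewrite (Rabs_mult _ F), (Rabs_mult _ G1), (Rabs_mult _ G2).
  rewrite (Rabs_pos_eq F), (Rabs_pos_eq (w ^ 2)) by lra.
  assert (C0 : Rabs ((s - 1) * (s - 2)) <= 2) by (rewrite Rabs_pos_eq; nra).
  assert (C1 : Rabs (3 * (s - 1) * w) <= 3 / 2)
    by (rewrite Rabs_left1; assert ((1 - s) * w <= 1 / 2) by nra; nra).
  assert (Rabs ((s - 1) * (s - 2)) * F <= 2 * b1 * F) by (apply Rmult_le_compat_r; nra).
  assert (Rabs (3 * (s - 1) * w) * Rabs G1 <= 3 / 2 * (b1 * F))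
    by (apply Rmult_le_compat; try apply Rabs_pos; lra).
  assert (w ^ 2 * Rabs G2 <= 1 / 4 * (b2 * F))
    by (apply Rmult_le_compat; try apply Rabs_pos; lra).
  assert (b1 * F <= b2 / 5 * F) by (apply Rmult_le_compat_r; lra).
  nra.
Qed.

Lemma Rabs_factor3_le (s w b1 b2 b3 F G1 G2 G3 : R) :
  0 < s <= 1 -> 0 <= w <= s / 2 -> 1 <= b1 -> 5 * b1 <= b2 -> 5 * b2 <= b3 -> 0 <= F ->
  Rabs G1 <= b1 * F -> Rabs G2 <= b2 * F -> Rabs G3 <= b3 * F ->
  Rabs ((s - 1) * (s - 2) * (s - 3) * F + (s - 1) * (7 * s - 11) * w * G1
        + 6 * (s - 1) * w ^ 2 * G2 + w ^ 3 * G3) <= b3 * F.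
Proof.
  intros Hs Hw Hb1 Hb2 Hb3 HF HG1 HG2 HG3.
  eapply Rle_trans; [apply Rabs_triang |].
  eapply Rle_trans; [apply Rplus_le_compat_r, Rabs_triang |].
  eapply Rle_trans; [apply Rplus_le_compat_r, Rplus_le_compat_r, Rabs_triang |].
  assert (Hw2 : 0 <= w ^ 2 <= 1 / 4) by (simpl; split; nra).
  assert (Hw3 : 0 <= w ^ 3 <= 1 / 8) by (simpl in *; split; nra).
  rewrite (Rabs_mult _ F), (Rabs_mult _ G1), (Rabs_mult _ G2), (Rabs_mult _ G3).
  rewrite (Rabs_pos_eq F), (Rabs_pos_eq (w ^ 3)) by lra.
  assert (C0 : Rabs ((s - 1) * (s - 2) * (s - 3)) <= 6)
    by (rewrite Rabs_left1; assert (0 <= (1 - s) * (2 - s) <= 2) by nra; nra).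
  assert (C1 : Rabs ((s - 1) * (7 * s - 11) * w) <= 11 / 2)
    by (rewrite Rabs_pos_eq; assert (0 <= (1 - s) * w <= 1 / 2) by nra; nra).
  assert (C2 : Rabs (6 * (s - 1) * w ^ 2) <= 3 / 2)
    by (rewrite Rabs_left1; assert (0 <= (1 - s) * w ^ 2 <= 1 / 4) by nra; nra).
  assert (Rabs ((s - 1) * (s - 2) * (s - 3)) * F <= 6 * b1 * F)
    by (apply Rmult_le_compat_r; nra).
  assert (Rabs ((s - 1) * (7 * s - 11) * w) * Rabs G1 <= 11 / 2 * (b1 * F))
    by (apply Rmult_le_compat; try apply Rabs_pos; lra).
  assert (Rabs (6 * (s - 1) * w ^ 2) * Rabs G2 <= 3 / 2 * (b2 * F))
    by (apply Rmult_le_compat; try apply Rabs_pos; lra).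
  assert (w ^ 3 * Rabs G3 <= 1 / 8 * (b3 * F))
    by (apply Rmult_le_compat; try apply Rabs_pos; lra).
  assert (b1 * F <= b2 / 5 * F) by (apply Rmult_le_compat_r; lra).
  assert (b2 * F <= b3 / 5 * F) by (apply Rmult_le_compat_r; lra).
  nra.
Qed.

Lemma psi_closed_forms (s : R) (phi phi1 phi2 phi3 : R -> R) (x : R) : 0 < x ->
  let K := s / 2 * Rpower x s in let y := gpow s x in let w := weight s x in
  psi s phi x = K / x * phi y /\
  psi1 s phi phi1 x = K / x ^ 2 * ((s - 1) * phi y + w * (y ^ 1 * phi1 y)) /\
  psi2 s phi phi1 phi2 x = K / x ^ 3 *
    ((s - 1) * (s - 2) * phi y + 3 * (s - 1) * w * (y ^ 1 * phi1 y)
     + w ^ 2 * (y ^ 2 * phi2 y)) /\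
  psi3 s phi phi1 phi2 phi3 x = K / x ^ 4 *
    ((s - 1) * (s - 2) * (s - 3) * phi y + (s - 1) * (7 * s - 11) * w * (y ^ 1 * phi1 y)
     + 6 * (s - 1) * w ^ 2 * (y ^ 2 * phi2 y) + w ^ 3 * (y ^ 3 * phi3 y)).
Proof.
  intros Hx K y w.
  assert (Hy : 0 < y) by (unfold y, gpow; pose proof (exp_pos (s * ln x)); unfold Rpower; lra).
  unfold K, w, weight, psi, psi1, psi2, psi3.
  rewrite !term_Rpower_pow by exact Hx. fold y.
  clearbody y. repeat split; field; lra.
Qed.

Lemma psi_bounds (s b1 b2 b3 : R) (phi phi1 phi2 phi3 : R -> R) (x : R) :
  0 < s <= 1 -> 1 <= b1 -> 5 * b1 <= b2 -> 5 * b2 <= b3 -> I01 x ->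
  (forall y, I01 y -> 0 <= phi y /\ Rabs (phi1 y) <= b1 / y * phi y /\
     Rabs (phi2 y) <= b2 / y ^ 2 * phi y /\ Rabs (phi3 y) <= b3 / y ^ 3 * phi y) ->
  0 <= psi s phi x /\ Rabs (psi1 s phi phi1 x) <= b1 / x * psi s phi x /\
  Rabs (psi2 s phi phi1 phi2 x) <= b2 / x ^ 2 * psi s phi x /\
  Rabs (psi3 s phi phi1 phi2 phi3 x) <= b3 / x ^ 3 * psi s phi x.
Proof.
  intros Hs Hb1 Hb2 Hb3 Hx Hphi.
  assert (Hx0 : 0 < x) by apply Hx.
  destruct (psi_closed_forms s phi phi1 phi2 phi3 x Hx0) as [E0 [E1 [E2 E3]]].
  rewrite E0, E1, E2, E3.
  pose proof (Rpower_in_01 s x (proj1 Hs) Hx) as HP.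
  pose proof (weight_bounds s x (proj1 Hs) Hx) as Hw.
  pose proof (gpow_I01 s x (proj1 Hs) Hx) as Hy.
  assert (HK : 0 <= s / 2 * Rpower x s) by nra.
  set (y := gpow s x) in *. set (w := weight s x) in *.
  assert (Hy0 : 0 < y) by apply Hy.
  destruct (Hphi y Hy) as [F0 [B1 [B2 B3]]].
  assert (G1 : Rabs (y ^ 1 * phi1 y) <= b1 * phi y)
    by (apply Rabs_pow_mult_le; [exact Hy0 | rewrite pow_1; exact B1]).
  assert (G2 : Rabs (y ^ 2 * phi2 y) <= b2 * phi y) by (apply Rabs_pow_mult_le; assumption).
  assert (G3 : Rabs (y ^ 3 * phi3 y) <= b3 * phi y) by (apply Rabs_pow_mult_le; assumption).
  split; [| split; [| split]].
  - apply Rmult_le_pos; [apply Rdiv_le_0_compat |]; lra.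
  - replace (b1 / x) with (b1 / x ^ 1) by (rewrite pow_1; reflexivity).
    apply Rabs_div_pow_mult_le; auto using Rabs_factor1_le.
  - apply Rabs_div_pow_mult_le; eauto using Rabs_factor2_le.
  - apply Rabs_div_pow_mult_le; eauto using Rabs_factor3_le.
Qed.

Lemma N2_eq_psi (beta : R) (phi : R -> R) (x : R) :
  0 < x -> N2 beta phi x = psi (1 / beta) phi x.
Proof.
  intros Hx. unfold N2, psi, term. change (g2 beta) with (gpow (1 / beta)).
  rewrite (is_derive_unique _ _ _ (is_derive_gpow (1 / beta) x Hx)).
  replace (INR 1 * (1 / beta) - INR 1) with (1 / beta - 1) by (simpl; ring). ring.
Qed.

Theorem lemmaA1 :
  exists kappa1 kappa2 : R, 1 < kappa1 /\ 1 < kappa2 /\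
    forall b1 b2 b3 : R,
      1 <= b1 -> kappa1 * b1 <= b2 -> kappa2 * b2 <= b3 ->
      forall beta : R, 1 <= beta ->
      forall phi : R -> R,
        C3class b1 b2 b3 phi -> C3class b1 b2 b3 (N2 beta phi).
Proof.
  exists 5, 5. split; [lra | split; [lra |]].
  intros b1 b2 b3 Hb1 Hb2 Hb3 beta Hbeta phi [phi1 [phi2 [phi3 [D1 [D2 [D3 [C3 Hphi]]]]]]].
  rewrite is_deriv_on_I01_iff in D1, D2, D3. rewrite continuous_on_I01_iff in C3.
  set (s := 1 / beta).
  assert (Hs : 0 < s <= 1).
  { unfold s. split; [apply Rdiv_lt_0_compat; lra |].
    apply Rmult_le_reg_r with beta; [lra |]. field_simplify; lra. }
  exists (psi1 s phi phi1), (psi2 s phi phi1 phi2), (psi3 s phi phi1 phi2 phi3).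
  rewrite !is_deriv_on_I01_iff, continuous_on_I01_iff.
  split; [| split; [| split; [| split]]]; intros x Hx.
  - apply (is_derive_I01_ext (psi s phi)); [| exact Hx | apply is_derive_I01_psi; tauto].
    intros y Hy. symmetry. apply N2_eq_psi, Hy.
  - apply is_derive_I01_psi1; tauto.
  - apply is_derive_I01_psi2; tauto.
  - apply continuous_I01_psi3; tauto.
  - rewrite N2_eq_psi by apply Hx. apply psi_bounds; assumption.
Qed.
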